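(* Let $i\colon Y\to X$ be a continuous bijection between topological spaces. If $X$ is homeomorphic to a subspace of a separable Hausdorff space, then so is $Y$. *)

From Stdlib Require Import Classical.

Record TopSpace : Type := {
  carrier :> Type;
  is_open : (carrier -> Prop) -> Prop;
  open_full : is_open (fun _ => True);
  open_inter : forall U V, is_open U -> is_open V -> is_open (fun x => U x /\ V x);
  open_union : forall F : (carrier -> Prop) -> Prop,
      (forall U, F U -> is_open U) -> is_open (fun x => exists U, F U /\ U x)
}.

Arguments is_open {t} _.

Definition continuous {X Y : TopSpace} (f : X -> Y) : Prop :=
  forall V : Y -> Prop, is_open V -> is_open (fun x => V (f x)).

Definition injective {A B : Type} (f : A -> B) : Prop :=
  forall x y, f x = f y -> x = y.

Definition surjective {A B : Type} (f : A -> B) : Prop :=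
  forall y, exists x, f x = y.

Definition bijective {A B : Type} (f : A -> B) : Prop :=
  injective f /\ surjective f.

Definition hausdorff (X : TopSpace) : Prop :=
  forall x y : X, x <> y ->
    exists U V : X -> Prop, is_open U /\ is_open V /\ U x /\ V y /\
      (forall z, ~ (U z /\ V z)).

Definition countable_set {A : Type} (D : A -> Prop) : Prop :=
  exists f : {x : A | D x} -> nat, injective f.

Definition dense {X : TopSpace} (D : X -> Prop) : Prop :=
  forall U : X -> Prop, is_open U -> (exists x, U x) -> exists x, U x /\ D x.

Definition separable (X : TopSpace) : Prop :=
  exists D : X -> Prop, countable_set D /\ dense D.

(* e is a topological embedding: a homeomorphism of X onto the subspace
   e(X) of Z (with the subspace topology). *)
Definition embedding {X Z : TopSpace} (e : X -> Z) : Prop :=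
  injective e /\ continuous e /\
  (forall U : X -> Prop, is_open U ->
     exists V : Z -> Prop, is_open V /\ forall x, U x <-> V (e x)).

Definition embeds_in_sep_hausdorff (X : TopSpace) : Prop :=
  exists (Z : TopSpace) (e : X -> Z), separable Z /\ hausdorff Z /\ embedding e.

(* The argument only uses a continuous injection [E : Y -> Z] into a separable
   Hausdorff space [Z] with countable dense set [D].  Glue to [Y] a copy of [D]
   whose points are isolated, and call [U] open when its trace on [Y] is open
   in [Y] and every [y] in [U] has a neighbourhood [V] of [E y] in [Z] such
   that the copies of all points of [D] in [V], except possibly [E y], lie in
   [U].  The copy of [D] is open and discrete, so [Y] sits in the glued space
   with its own topology; the copy of [D] together with the points of [Y] mapped
   into [D] is countable and dense, because every open set meeting [Y] at [y]
   catches a copy of a point of [D] near [E y]; and points are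
   separated either through [E] and the Hausdorff property of [Z], or, when one
   of them is an isolated point, by that point and its complement, which is
   open because [Z] is T1. *)
From Stdlib Require Import Classical ClassicalEpsilon FunctionalExtensionality
  PropExtensionality ProofIrrelevance Lia.

Lemma is_open_ext (T : TopSpace) (P Q : T -> Prop) :
  (forall x, P x <-> Q x) -> is_open P -> is_open Q.
Proof.
  intros HPQ HP.
  replace Q with P; [exact HP |].
  apply functional_extensionality; intro x; apply propositional_extensionality, HPQ.
Qed.

Lemma is_open_empty (T : TopSpace) (P : T -> Prop) : (forall x, ~ P x) -> is_open P.
Proof.
  intro HP.
  apply (is_open_ext _ (fun x => exists U, False /\ U x)).
  - intro x; split; [intros [_ [[] _]] | intro Px; destruct (HP x Px)].
  - apply open_union; intros _ [].
Qed.

Lemma continuous_comp (X Y Z : TopSpace) (f : X -> Y) (g : Y -> Z) :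
  continuous f -> continuous g -> continuous (fun x => g (f x)).
Proof. intros Hf Hg V HV; exact (Hf _ (Hg V HV)). Qed.

Lemma injective_comp (A B C : Type) (f : A -> B) (g : B -> C) :
  injective f -> injective g -> injective (fun x => g (f x)).
Proof. intros Hf Hg x y Hxy; exact (Hf _ _ (Hg _ _ Hxy)). Qed.

Lemma countable_setP (A : Type) (D : A -> Prop) :
  countable_set D <->
  exists g : A -> nat, forall x y, D x -> D y -> g x = g y -> x = y.
Proof.
  split.
  - intros [f Hf].
    exists (fun x => match excluded_middle_informative (D x) with
                     | left Dx => f (exist _ x Dx)
                     | right _ => 0
                     end).
    intros x y Dx Dy.
    destruct (excluded_middle_informative (D x)) as [Dx' |]; [| contradiction].
    destruct (excluded_middle_informative (D y)) as [Dy' |]; [| contradiction].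
    intro Hxy; apply Hf in Hxy; injection Hxy; trivial.
  - intros [g Hg]; exists (fun x => g (proj1_sig x)).
    intros [x Dx] [y Dy] Hxy; apply subset_eq_compat, Hg; assumption.
Qed.

Section Glue.
Variables (Y Z : TopSpace) (E : Y -> Z) (D : Z -> Prop).

Definition glue_carrier : Type := (Y + {z | D z})%type.

Definition glue_open (U : glue_carrier -> Prop) : Prop :=
  is_open (fun y => U (inl y)) /\
  forall y, U (inl y) -> exists V : Z -> Prop, is_open V /\ V (E y) /\
    forall d : {z | D z}, V (proj1_sig d) -> proj1_sig d <> E y -> U (inr d).

Lemma glue_open_full : glue_open (fun _ => True).
Proof.
  split; [apply open_full |].
  intros y _; exists (fun _ => True); split; [apply open_full | auto].
Qed.

Lemma glue_open_inter (U V : glue_carrier -> Prop) :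
  glue_open U -> glue_open V -> glue_open (fun w => U w /\ V w).
Proof.
  intros [HU HUnear] [HV HVnear]; split; [exact (open_inter _ _ _ HU HV) |].
  intros y [Uy Vy].
  destruct (HUnear y Uy) as (A & HA & Ay & HAU).
  destruct (HVnear y Vy) as (B & HB & By & HBV).
  exists (fun z => A z /\ B z); split; [apply open_inter; assumption |].
  split; [auto |]; intros d [Ad Bd] Hd; auto.
Qed.

Lemma glue_open_union (F : (glue_carrier -> Prop) -> Prop) :
  (forall U, F U -> glue_open U) -> glue_open (fun w => exists U, F U /\ U w).
Proof.
  intros HF; split.
  - apply (is_open_ext _ (fun y => exists U', (exists U, F U /\ U' = fun y => U (inl y)) /\ U' y)).
    + intro y; split.
      * intros [U' [[U [FU ->]] Uy]]; exists U; auto.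
      * intros [U [FU Uy]]; exists (fun y => U (inl y)); split; [exists U |]; auto.
    + apply open_union; intros U' [U [FU ->]]; apply (HF U FU).
  - intros y [U [FU Uy]].
    destruct (proj2 (HF U FU) y Uy) as (V & HV & Vy & HVU).
    exists V; split; [| split]; auto.
    intros d Vd Hd; exists U; auto.
Qed.

Definition glue_space : TopSpace :=
  {| carrier := glue_carrier; is_open := glue_open;
     open_full := glue_open_full; open_inter := glue_open_inter;
     open_union := glue_open_union |}.

Definition glue_proj (w : glue_space) : Z :=
  match w with inl y => E y | inr d => proj1_sig d end.

Definition glue_dense_set (w : glue_space) : Prop :=
  match w with inl y => D (E y) | inr _ => True end.

Lemma glue_embedding : embedding (fun y : Y => inl y : glue_space).
Proof.
  split; [| split].
  - intros y y' Hyy'; injection Hyy'; trivial.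
  - intros V [HV _]; exact HV.
  - intros U HU; exists (fun w : glue_space => match w with inl y => U y | inr _ => True end).
    split; [split | tauto].
    + exact HU.
    + intros y _; exists (fun _ => True); split; [apply open_full | auto].
Qed.

Lemma glue_open_isolated (d : {z | D z}) : is_open (fun w : glue_space => w = inr d).
Proof.
  split; [apply is_open_empty; discriminate | intros y Hy; discriminate].
Qed.

Lemma glue_proj_continuous : continuous E -> continuous glue_proj.
Proof.
  intros HE A HA; split; [exact (HE A HA) |].
  intros y Ay; exists A; split; [| split]; auto.
Qed.

Lemma glue_open_punctured :
  hausdorff Z -> forall d : {z | D z}, is_open (fun w : glue_space => w <> inr d).
Proof.
  intros HZ d; split.
  - apply (is_open_ext _ (fun _ => True)); [split; [discriminate | auto] | apply open_full].
  - intros y _; destruct (classic (E y = proj1_sig d)) as [Hyd | Hyd].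
    + exists (fun _ => True); split; [apply open_full | split; [exact I |]].
      intros d0 _ Hd0 Hdd0; injection Hdd0 as ->; congruence.
    + destruct (HZ _ _ Hyd) as (A & B & HA & HB & Ay & Bd & HAB).
      exists A; split; [| split]; auto.
      intros d0 Ad0 _ Hdd0; injection Hdd0 as ->; exact (HAB _ (conj Ad0 Bd)).
Qed.

Lemma glue_hausdorff :
  continuous E -> injective E -> hausdorff Z -> hausdorff glue_space.
Proof.
  intros HE HEinj HZ [y | d] w' Hne; [destruct w' as [y' | d'] |].
  - assert (HEyy' : E y <> E y') by (intro Heq; apply Hne; f_equal; exact (HEinj _ _ Heq)).
    destruct (HZ _ _ HEyy') as (A & B & HA & HB & Ay & By & HAB).
    exists (fun w => A (glue_proj w)), (fun w => B (glue_proj w)).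
    refine (conj _ (conj _ (conj Ay (conj By (fun w => HAB _))))); apply glue_proj_continuous; auto.
  - exists (fun w => w <> inr d'), (fun w => w = inr d').
    refine (conj _ (conj _ (conj _ (conj eq_refl _)))).
    + apply glue_open_punctured, HZ.
    + apply glue_open_isolated.
    + discriminate.
    + intros w [Hw ->]; apply Hw; reflexivity.
  - exists (fun w => w = inr d), (fun w => w <> inr d).
    refine (conj _ (conj _ (conj eq_refl (conj _ _)))).
    + apply glue_open_isolated.
    + apply glue_open_punctured, HZ.
    + congruence.
    + intros w [-> Hw]; apply Hw; reflexivity.
Qed.

Lemma glue_dense : dense D -> dense glue_dense_set.
Proof.
  intros HD U [_ HUnear] [[y | d] Uw].
  - destruct (classic (D (E y))) as [Dy | nDy]; [exists (inl y); auto |].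
    destruct (HUnear y Uw) as (V & HV & Vy & HVU).
    destruct (HD V HV (ex_intro _ _ Vy)) as (z & Vz & Dz).
    exists (inr (exist _ z Dz)); split; [| exact I].
    apply HVU; [exact Vz |]; simpl; intros Hz; rewrite Hz in Dz; contradiction.
  - exists (inr d); split; [exact Uw | exact I].
Qed.

Lemma glue_countable : injective E -> countable_set D -> countable_set glue_dense_set.
Proof.
  intros HEinj HD; apply countable_setP in HD as [g Hg]; apply countable_setP.
  exists (fun w : glue_space =>
            match w with inl y => 2 * g (E y) | inr d => S (2 * g (proj1_sig d)) end).
  intros [y | [z Dz]] [y' | [z' Dz']]; simpl; intros Hw Hw' Heq; try lia.
  - f_equal; apply HEinj, Hg; [exact Hw | exact Hw' | lia].
  - f_equal; apply subset_eq_compat, Hg; [exact Dz | exact Dz' | lia].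
Qed.

End Glue.

Theorem embeds_in_sep_hausdorff_of_injection (Y Z : TopSpace) (E : Y -> Z) :
  continuous E -> injective E -> separable Z -> hausdorff Z ->
  embeds_in_sep_hausdorff Y.
Proof.
  intros HE HEinj [D [HDc HDd]] HZ.
  exists (glue_space Y Z E D), (fun y => inl y).
  split; [| split].
  - exists (glue_dense_set Y Z E D); split.
    + exact (glue_countable Y Z E D HEinj HDc).
    + exact (glue_dense Y Z E D HDd).
  - exact (glue_hausdorff Y Z E D HE HEinj HZ).
  - exact (glue_embedding Y Z E D).
Qed.

Theorem mainTheorem18 (X Y : TopSpace) (i : Y -> X) :
  continuous i -> bijective i ->
  embeds_in_sep_hausdorff X -> embeds_in_sep_hausdorff Y.
Proof.
  intros Hi [Hiinj _] [Z [e [HZsep [HZ [Heinj [He _]]]]]].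
  apply (embeds_in_sep_hausdorff_of_injection Y Z (fun y => e (i y))).
  - exact (continuous_comp _ _ _ i e Hi He).
  - exact (injective_comp _ _ _ i e Hiinj Heinj).
  - exact HZsep.
  - exact HZ.
Qed.
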